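(* Let $T\ge1$, let the label set be $\{0,1\}^T$ (so $k=2^T$, identified with $\{1,\dots,k\}$), and let $L_{Ham,T}(\hat y,y)=\frac1T\sum_{t=1}^T[\hat y_t\ne y_t]$ be the normalized Hamming loss, with quadratic surrogate $\Phi_{quad}(f,y)=\frac1{2k}\|f+L_{Ham,T}(:,y)\|_2^2$. If the scores are constrained to the column space $\mathcal{F}_{Ham,T}=\mathrm{span}(L_{Ham,T})$, then $$H_{\Phi_{quad},L_{Ham,T},\mathcal{F}_{Ham,T}}(\varepsilon)=\frac{\varepsilon^2}{8T},\qquad0\le\varepsilon\le1.$$
   Context: $\mathrm{pred}(f)$ is the smallest index maximizing $f_c$ (under the fixed identification of labels with $\{1,\dots,k\}$). For $q\in\Delta_k$: $\ell(f,q)=\sum_cq_cL(\mathrm{pred}(f),c)$, $\phi(f,q)=\sum_cq_c\Phi(f,c)$, $\delta\ell(f,q)=\ell(f,q)-\inf_{\hat f\in\mathcal{F}}\ell(\hat f,q)$, $\delta\phi(f,q)=\phi(f,q)-\inf_{\hat f\in\mathcal{F}}\phi(\hat f,q)$; calibration function $H_{\Phi,L,\mathcal{F}}(\varepsilon)=\inf\{\delta\phi(f,q):f\in\mathcal{F},q\in\Delta_k,\delta\ell(f,q)\ge\varepsilon\}$ ($+\infty$ if empty). *)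

From HB Require Import structures.
From mathcomp Require Import all_boot all_order all_algebra.
From mathcomp Require Import all_classical all_reals ereal.

Set Implicit Arguments. Unset Strict Implicit. Unset Printing Implicit Defensive.
Import Order.TTheory GRing.Theory Num.Theory.
Local Open Scope classical_set_scope.
Local Open Scope ring_scope.

(* Labels are identified with indices 0..k-1 (the paper's 1..k, shifted).
   Scores f and distributions q are column vectors 'cV[R]_k. *)

Definition pred_idx (R : realType) (k : nat) (f : 'cV[R]_k) : nat :=
  find (fun i : 'I_k => [forall j : 'I_k, f j 0 <= f i 0]) (enum 'I_k).

Definition simplex (R : realType) (k : nat) : set 'cV[R]_k :=
  [set q | (forall c : 'I_k, 0 <= q c 0) /\ \sum_(c < k) q c 0 = 1].

Definition task_risk (R : realType) (k : nat) (L : nat -> nat -> R)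
  (f q : 'cV[R]_k) : R := \sum_(c < k) q c 0 * L (pred_idx f) c.

Definition surr_risk (R : realType) (k : nat) (Phi : 'cV[R]_k -> 'I_k -> R)
  (f q : 'cV[R]_k) : R := \sum_(c < k) q c 0 * Phi f c.

Definition excess_task (R : realType) (k : nat) (L : nat -> nat -> R)
  (F : set 'cV[R]_k) (f q : 'cV[R]_k) : R :=
  task_risk L f q - inf [set task_risk L g q | g in F].

Definition excess_surr (R : realType) (k : nat) (Phi : 'cV[R]_k -> 'I_k -> R)
  (F : set 'cV[R]_k) (f q : 'cV[R]_k) : R :=
  surr_risk Phi f q - inf [set surr_risk Phi g q | g in F].

(* calibration function H_{Phi,L,F}(eps); ereal_inf of the empty set is +oo *)
Definition calibration (R : realType) (k : nat) (Phi : 'cV[R]_k -> 'I_k -> R)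
  (L : nat -> nat -> R) (F : set 'cV[R]_k) (eps : R) : \bar R :=
  ereal_inf [set (excess_surr Phi F fq.1 fq.2)%:E | fq in
     [set fq : 'cV[R]_k * 'cV[R]_k | F fq.1 /\ @simplex R k fq.2 /\
                                     eps <= excess_task L F fq.1 fq.2]].

(* Label index y in 0..2^T-1 encodes the bit vector (bit_t(y))_{t<T}. *)
Definition label_bit (y t : nat) : bool := odd (y %/ 2 ^ t).

Definition ham_loss (R : realType) (T : nat) (yh y : nat) : R :=
  T%:R^-1 * \sum_(t < T) (label_bit yh t != label_bit y t)%:R.

Definition ham_mx (R : realType) (T : nat) : 'M[R]_(2 ^ T) :=
  \matrix_(i < 2 ^ T, j < 2 ^ T) @ham_loss R T i j.

Definition ham_span (R : realType) (T : nat) : set 'cV[R]_(2 ^ T) :=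
  [set f | exists theta : 'cV[R]_(2 ^ T), f = @ham_mx R T *m theta].

Definition quad_surr (R : realType) (T : nat) (f : 'cV[R]_(2 ^ T))
  (y : 'I_(2 ^ T)) : R :=
  (2 * (2 ^ T)%:R)^-1 * \sum_(c < 2 ^ T) (f c 0 + @ham_mx R T c y) ^+ 2.

From HB Require Import structures.
From mathcomp Require Import all_boot all_order all_algebra.
From mathcomp Require Import all_classical all_reals ereal.
From mathcomp Require Import ring lra zify.

Set Implicit Arguments. Unset Strict Implicit. Unset Printing Implicit Defensive.
Import Order.TTheory GRing.Theory Num.Theory.
Local Open Scope classical_set_scope.
Local Open Scope ring_scope.

(* Every score in the span of the Hamming loss matrix is affine in the T bits
   of the label, f_x = f_0 + sum_t a_t x_t.  For such scores the
   quadratic excess risk is (1/2k) sum_x (f + Lq)_x^2, and averaging a square over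
   the cube bounds it below by (1/8) sum_t d_t^2, d being the bit coefficients of
   f + Lq.  The task risk of label x is (Lq)_x = c_0 + sum_t c_t x_t, so bit t
   contributes the regret c_t x_t - min(0, c_t); since the predicted label
   maximizes f, its bit t is set only if a_t >= 0 and unset only if a_t <= 0,
   whence that regret is at most |a_t + c_t| = |d_t|.  Cauchy-Schwarz over the T
   bits gives eps^2 <= T sum_t d_t^2.  Equality is attained by splitting the mass
   of q as (1-p, p), p = (1+eps)/2, between the all-zeros and the all-ones label
   and taking the constant score -1/2, which predicts the all-zeros label. *)

Lemma inf_attained (R : realType) (E : set R) (m : R) :
  E m -> lbound E m -> inf E = m.
Proof.
move=> Em lbm; apply/le_anti/andP; split; first by apply: ge_inf => //; exists m.
by apply: lb_le_inf => //; exists m.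
Qed.

Section Calibration.
Variables (R : realType) (k : nat).
Implicit Types (f q : 'cV[R]_k) (L : nat -> nat -> R) (F : set 'cV[R]_k).

Lemma pred_idx_max f : (0 < k)%N ->
  exists i : 'I_k, pred_idx f = i /\ forall j, f j 0 <= f i 0.
Proof.
move=> k_gt0; pose i0 := Ordinal k_gt0.
have [m _ m_max] := @arg_maxP _ R _ i0 xpredT (fun i => f i 0) isT.
pose P := fun i : 'I_k => [forall j, f j 0 <= f i 0].
have hasP : has P (enum 'I_k).
  by apply/hasP; exists m; [rewrite mem_enum | apply/forallP => j; exact: m_max].
have find_lt : (find P (enum 'I_k) < k)%N by rewrite -[k in (_ < k)%N]size_enum_ord -has_find.
exists (Ordinal find_lt); split => //.
have := nth_find i0 hasP; rewrite [nth _ _ _](_ : _ = Ordinal find_lt).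
  by move/forallP.
by apply: val_inj; rewrite /= nth_enum_ord.
Qed.

Lemma pred_idx_const f : (0 < k)%N -> (forall i j, f i 0 = f j 0) -> pred_idx f = 0%N.
Proof.
move=> k_gt0 f_const; rewrite /pred_idx.
have : (0 < size (enum 'I_k))%N by rewrite size_enum_ord.
case: (enum 'I_k) => //= x s _.
suff -> : [forall j, f j 0 <= f x 0] by [].
by apply/forallP => j; rewrite (f_const j x).
Qed.

Lemma inf_task_risk_le L F f q : (forall i j, 0 <= L i j) ->
  (forall c, 0 <= q c 0) -> F f ->
  inf [set task_risk L g q | g in F] <= task_risk L f q.
Proof.
move=> L_ge0 q_ge0 Ff; apply: ge_inf; last by exists f.
exists 0 => _ [g _ <-]; apply: sumr_ge0 => c _; exact: mulr_ge0.
Qed.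

Lemma calibration_eq (Phi : 'cV[R]_k -> 'I_k -> R) L F (eps h : R) :
  (forall f q, F f -> simplex q -> eps <= excess_task L F f q ->
     h <= excess_surr Phi F f q) ->
  (exists f q, [/\ F f, simplex q, eps <= excess_task L F f q &
     excess_surr Phi F f q = h]) ->
  calibration Phi L F eps = h%:E.
Proof.
move=> lower [f [q [Ff q_simplex f_eps fq_h]]]; apply/le_anti/andP; split.
  by rewrite -fq_h; apply: ereal_inf_lbound; exists (f, q).
apply: le_ereal_inf_tmp => _ [[g r] [Fg [r_simplex g_eps]] <-].
by rewrite lee_fin; exact: lower.
Qed.

End Calibration.

Lemma label_bit0 t : label_bit 0 t = false.
Proof. by rewrite /label_bit div0n. Qed.

Lemma label_bit_small c T : (c < 2 ^ T)%N -> label_bit c T = false.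
Proof. by move=> c_lt; rewrite /label_bit divn_small. Qed.

Lemma label_bit_top c T : (c < 2 ^ T)%N -> label_bit (2 ^ T + c) T = true.
Proof. by move=> c_lt; rewrite /label_bit divnDl // divnn expn_gt0 /= divn_small. Qed.

Lemma label_bit_low c T t : (c < 2 ^ T)%N -> (t < T)%N ->
  label_bit (2 ^ T + c) t = label_bit c t.
Proof.
move=> c_lt t_lt; rewrite /label_bit divnDl; last by rewrite dvdn_exp2l // ltnW.
rewrite -(subnK (ltnW t_lt)) expnD mulnK ?expn_gt0 // oddD oddX orbF.
by rewrite subn_eq0 leqNgt t_lt.
Qed.

Fixpoint label_of_bits (b : nat -> bool) (T : nat) : nat :=
  if T is T'.+1 then (b T' * 2 ^ T' + label_of_bits b T')%N else 0%N.

Lemma label_of_bits_lt b T : (label_of_bits b T < 2 ^ T)%N.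
Proof. by elim: T => [|T IH] //=; rewrite expnS; case: (b T) => /=; lia. Qed.

Lemma label_bit_of_bits b T t : (t < T)%N -> label_bit (label_of_bits b T) t = b t.
Proof.
elim: T => [|T IH] //=; have lt_T := label_of_bits_lt b T.
rewrite ltnS leq_eqVlt => /orP[/eqP-> | t_lt].
  by case: (b T) => /=; rewrite ?mul1n ?mul0n ?add0n ?label_bit_top ?label_bit_small.
by case: (b T) => /=; rewrite ?mul1n ?mul0n ?add0n ?label_bit_low // IH.
Qed.

Lemma sum_sqr_affine_bits (R : numFieldType) T (a : R) (d : nat -> R) :
  \sum_(c < 2 ^ T) (a + \sum_(t < T) d t * (label_bit c t)%:R) ^+ 2 =
  (2 ^ T)%:R * ((a + (\sum_(t < T) d t) / 2) ^+ 2 + (\sum_(t < T) d t ^+ 2) / 4).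
Proof.
elim: T a => [|T IH] a; first by rewrite expn0 big_ord1 !big_ord0; field.
rewrite [in LHS]expnS mul2n -addnn big_split_ord /=.
have low (c : 'I_(2 ^ T)) : \sum_(t < T.+1) d t * (label_bit (lshift (2 ^ T) c) t)%:R
    = \sum_(t < T) d t * (label_bit c t)%:R.
  by rewrite big_ord_recr /= label_bit_small //= mulr0 addr0.
have high (c : 'I_(2 ^ T)) : \sum_(t < T.+1) d t * (label_bit (rshift (2 ^ T) c) t)%:R
    = d T + \sum_(t < T) d t * (label_bit c t)%:R.
  rewrite big_ord_recr /= label_bit_top // mulr1 addrC.
  by congr (_ + _); apply: eq_bigr => t _; rewrite label_bit_low.
under eq_bigr do rewrite low.
under [X in _ + X]eq_bigr do rewrite high addrA.
by rewrite !IH !big_ord_recr /= expnS natrM; field.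
Qed.

Lemma sqr_sum_le (R : realFieldType) n (e : nat -> R) :
  (\sum_(t < n) e t) ^+ 2 <= n%:R * \sum_(t < n) e t ^+ 2.
Proof.
rewrite -subr_ge0; have [->|n_gt0] := posnP n; first by rewrite !big_ord0 mul0r; lra.
set S := \sum_(t < n) e t; set Q := \sum_(t < n) e t ^+ 2.
have n_pos : (0 : R) < n%:R by rewrite ltr0n.
pose m := S / n%:R.
have var_ge0 : 0 <= \sum_(t < n) (e t - m) ^+ 2 by apply: sumr_ge0 => t _; exact: sqr_ge0.
suff <- : n%:R * \sum_(t < n) (e t - m) ^+ 2 = n%:R * Q - S ^+ 2 by exact: mulr_ge0.
under eq_bigr do rewrite sqrrB.
rewrite big_split sumrB /= sumrMnl -mulr_suml sumr_const card_ord -/Q -/S /m.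
by rewrite mulr2n -[m ^+ 2 *+ n]mulr_natl /m; field; rewrite gt_eqF.
Qed.

Lemma coord_regret_le (R : realDomainType) (a c : R) (b : bool) :
  (if b then 0 <= a else a <= 0) ->
  0 <= c * b%:R - Num.min 0 c /\ (c * b%:R - Num.min 0 c) ^+ 2 <= (a + c) ^+ 2.
Proof.
have := sqr_ge0 (a + c).
by have [c_ge0|c_lt0] := leP 0 c; case: b => /= a_sgn; split; nra.
Qed.

Definition two_point (R : pzSemiRingType) n (z w : 'I_n) (a b : R) : 'cV[R]_n :=
  \col_c (a * (c == z)%:R + b * (c == w)%:R).

Lemma sum_two_point (R : comPzSemiRingType) n (z w : 'I_n) (a b : R) (G : 'I_n -> R) :
  \sum_(c < n) two_point z w a b c 0 * G c = a * G z + b * G w.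
Proof.
have sum_delta y : \sum_(c < n) (c == y)%:R * G c = G y.
  by rewrite (bigD1 y) //= eqxx mul1r big1 ?addr0 // => c /negbTE ->; rewrite mul0r.
under eq_bigr do rewrite mxE mulrDl -!mulrA.
by rewrite big_split -!mulr_sumr !sum_delta.
Qed.

Section Hamming.
Variables (R : realType) (T : nat).
Local Notation k := (2 ^ T)%N.
Local Notation L := (@ham_mx R T).
Local Notation loss := (@ham_loss R T).
Local Notation F := (@ham_span R T).
Local Notation Phi := (@quad_surr R T).
Implicit Types (f q theta : 'cV[R]_k).

Definition ham_const theta : R :=
  T%:R^-1 * \sum_(y < k) theta y 0 * \sum_(t < T) (label_bit y t)%:R.

Definition ham_coef theta (t : nat) : R :=
  T%:R^-1 * \sum_(y < k) theta y 0 * (1 - 2 * (label_bit y t)%:R).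

Lemma natr_neqb (b1 b2 : bool) :
  ((b1 != b2)%:R : R) = b2%:R + b1%:R * (1 - 2 * b2%:R).
Proof. by case: b1; case: b2 => /=; ring. Qed.

Lemma ham_loss_ge0 x y : 0 <= loss x y.
Proof. by apply: mulr_ge0; rewrite ?invr_ge0 ?ler0n ?sumr_ge0. Qed.

Lemma sum_ham_loss_affine theta x :
  \sum_(y < k) theta y 0 * loss x y
  = ham_const theta + \sum_(t < T) ham_coef theta t * (label_bit x t)%:R.
Proof.
rewrite /ham_loss /ham_const /ham_coef.
under eq_bigr => y _ do rewrite mulrCA mulr_sumr.
rewrite -mulr_sumr exchange_big /=.
under eq_bigr => t _ do under eq_bigr => y _ do rewrite natr_neqb mulrDr mulrCA.
under eq_bigr => t _ do rewrite big_split /= -mulr_sumr.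
rewrite big_split /= mulrDr exchange_big /= mulr_sumr; congr (_ + _).
  by rewrite -mulr_sumr; congr (_ * _); apply: eq_bigr => y _; rewrite mulr_sumr.
by rewrite mulr_sumr; apply: eq_bigr => t _; ring.
Qed.

Lemma ham_mx_mulE theta (c : 'I_k) :
  (L *m theta) c 0 = \sum_(y < k) theta y 0 * loss c y.
Proof. by rewrite mxE; apply: eq_bigr => y _; rewrite mxE mulrC. Qed.

Lemma surr_risk_quad_sub f q : \sum_(c < k) q c 0 = 1 ->
  surr_risk Phi f q - surr_risk Phi (- (L *m q)) q
  = (2 * k%:R)^-1 * \sum_(c < k) (f c 0 + (L *m q) c 0) ^+ 2.
Proof.
move=> q_sum; rewrite /surr_risk /quad_surr -sumrB mulr_sumr.
set kappa := (2 * k%:R)^-1.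
under eq_bigr do rewrite -mulrBr -mulrBr -sumrB mulr_sumr mulr_sumr.
rewrite exchange_big; apply: eq_bigr => c _ /=.
set v := (L *m q) c 0.
rewrite (_ : (- (L *m q)) c 0 = - v); last by rewrite mxE.
have v_sum : \sum_(y < k) L c y * q y 0 = v by rewrite /v mxE.
transitivity (\sum_(y < k) (kappa * (f c 0 ^+ 2 - v ^+ 2)) * q y 0
   + \sum_(y < k) (2 * kappa * (f c 0 + v)) * (L c y * q y 0)).
  by rewrite -big_split; apply: eq_bigr => y _ /=; ring.
by rewrite -!mulr_sumr q_sum v_sum; ring.
Qed.

Lemma excess_surr_quad f q : \sum_(c < k) q c 0 = 1 ->
  excess_surr Phi F f q = (2 * k%:R)^-1 * \sum_(c < k) (f c 0 + (L *m q) c 0) ^+ 2.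
Proof.
move=> q_sum; rewrite /excess_surr (@inf_attained _ _ (surr_risk Phi (- (L *m q)) q)).
- exact: surr_risk_quad_sub.
- by exists (- (L *m q)) => //; exists (- q); rewrite mulmxN.
move=> _ [g _ <-]; rewrite -subr_ge0 surr_risk_quad_sub //.
by apply: mulr_ge0; rewrite ?invr_ge0 ?mulr_ge0 ?ler0n ?sumr_ge0 // => c _; exact: sqr_ge0.
Qed.

Lemma argmax_bits_coef_sign (a : nat -> R) (i t : nat) :
  (forall j : 'I_k, \sum_(s < T) a s * (label_bit j s)%:R
                    <= \sum_(s < T) a s * (label_bit i s)%:R) ->
  (t < T)%N -> if label_bit i t then 0 <= a t else a t <= 0.
Proof.
move=> i_max t_lt.
pose flip s := if s == t then ~~ label_bit i s else label_bit i s.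
have := i_max (Ordinal (label_of_bits_lt flip T)).
rewrite (bigD1 (Ordinal t_lt)) // [X in _ <= X](bigD1 (Ordinal t_lt)) //=.
rewrite label_bit_of_bits // /flip eqxx.
under eq_bigr => s s_t do rewrite label_bit_of_bits // /flip (negbTE (s_t : s != t :> nat)).
by case: (label_bit i t) => /=; lra.
Qed.

Lemma inf_task_risk_ham_ge q :
  ham_const q + \sum_(t < T) Num.min 0 (ham_coef q t)
  <= inf [set task_risk loss g q | g in F].
Proof.
apply: lb_le_inf; first by exists (task_risk loss 0 q), 0 => //; exists 0; rewrite mulmx0.
move=> _ [g _ <-]; rewrite /task_risk sum_ham_loss_affine lerD2l.
apply: ler_sum => t _; set c := ham_coef q t.
by have [c_ge0|c_lt0] := leP 0 c; case: (label_bit _ _) => /=; lra.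
Qed.

Lemma inf_task_risk_ham_le q (x : 'I_k) : (forall c, 0 <= q c 0) ->
  inf [set task_risk loss g q | g in F] <= (L *m q) x 0.
Proof.
move=> q_ge0; have [i [pred_i i_max]] := pred_idx_max (- (L *m q)) (expn_gt0 2 T).
have opp_Lq (j : 'I_k) : (- (L *m q)) j 0 = - (L *m q) j 0 by rewrite mxE.
apply: le_trans (inf_task_risk_le (@ham_loss_ge0) q_ge0 _) _.
  by exists (- q); rewrite mulmxN.
by rewrite /task_risk pred_i -ham_mx_mulE -lerN2 -!opp_Lq; exact: i_max.
Qed.

Lemma excess_task_ham_le f q :
  excess_task loss F f q <= \sum_(t < T)
    (ham_coef q t * (label_bit (pred_idx f) t)%:R - Num.min 0 (ham_coef q t)).
Proof.
have := inf_task_risk_ham_ge q.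
by rewrite /excess_task /task_risk sum_ham_loss_affine sumrB; lra.
Qed.

Lemma excess_surr_ham_ge theta q : \sum_(c < k) q c 0 = 1 ->
  (\sum_(t < T) (ham_coef theta t + ham_coef q t) ^+ 2) / 8
  <= excess_surr Phi F (L *m theta) q.
Proof.
move=> q_sum; rewrite excess_surr_quad //.
under [X in _ <= _ * X]eq_bigr do rewrite !ham_mx_mulE !sum_ham_loss_affine addrACA -big_split /=.
under [X in _ <= _ * X]eq_bigr do under eq_bigr do rewrite -mulrDl.
rewrite (sum_sqr_affine_bits _ _ (fun t => ham_coef theta t + ham_coef q t)).
set z := (_ + _ / 2) ^+ 2; set D := \sum_(t < T) _.
have k_neq0 : k%:R != 0 :> R by rewrite pnatr_eq0 -lt0n expn_gt0.
have -> : (2 * k%:R)^-1 * (k%:R * (z + D / 4)) = z / 2 + D / 8 by field.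
have z_ge0 : 0 <= z by exact: sqr_ge0.
lra.
Qed.

Lemma calibration_ham_ge (eps : R) f q : (0 < T)%N -> 0 <= eps ->
  F f -> simplex q -> eps <= excess_task loss F f q ->
  eps ^+ 2 / (8 * T%:R) <= excess_surr Phi F f q.
Proof.
move=> T_gt0 eps_ge0 [theta ->] [_ q_sum] eps_le.
have [i [pred_i i_max]] := pred_idx_max (L *m theta) (expn_gt0 2 T).
pose d t := ham_coef theta t + ham_coef q t.
pose e t := ham_coef q t * (label_bit i t)%:R - Num.min 0 (ham_coef q t).
have e_d (t : 'I_T) : 0 <= e t /\ e t ^+ 2 <= d t ^+ 2.
  apply: coord_regret_le; apply: argmax_bits_coef_sign (ltn_ord t) => j.
  by have := i_max j; rewrite !ham_mx_mulE !sum_ham_loss_affine lerD2l.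
have eps_le_sum : eps <= \sum_(t < T) e t.
  by apply: le_trans eps_le _; rewrite /e -pred_i; exact: excess_task_ham_le.
have T_pos : (0 : R) < T%:R by rewrite ltr0n.
have sqr_le : eps ^+ 2 <= T%:R * \sum_(t < T) d t ^+ 2.
  apply: (@le_trans _ _ ((\sum_(t < T) e t) ^+ 2)).
    by rewrite ler_sqr ?nnegrE //; apply: le_trans eps_le_sum.
  apply: le_trans (sqr_sum_le T e) _.
  by rewrite ler_pM2l //; apply: ler_sum => t _; exact: (e_d t).2.
apply: le_trans (excess_surr_ham_ge theta q_sum).
have -> : (\sum_(t < T) d t ^+ 2) / 8 = T%:R * (\sum_(t < T) d t ^+ 2) / (8 * T%:R).
  by field; rewrite gt_eqF.
by rewrite ler_pM2r // invr_gt0 mulr_gt0.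
Qed.

Definition zero_label : 'I_k := Ordinal (expn_gt0 2 T).
Definition ones_label : 'I_k := Ordinal (label_of_bits_lt (fun=> true) T).

Lemma ham_loss_diag x : loss x x = 0.
Proof. by rewrite /ham_loss big1 ?mulr0 // => t _; rewrite eqxx. Qed.

Lemma ham_loss_zero x : loss x 0 = T%:R^-1 * \sum_(t < T) (label_bit x t)%:R.
Proof. by congr (_ * _); apply: eq_bigr => t _; rewrite label_bit0; case: label_bit. Qed.

Lemma ham_loss_ones x : (0 < T)%N -> loss x ones_label = 1 - loss x 0.
Proof.
move=> T_gt0; rewrite ham_loss_zero /ham_loss /=.
rewrite (eq_bigr (fun t : 'I_T => 1 - (label_bit x t)%:R)); last first.
  by move=> t _; rewrite label_bit_of_bits //; case: (label_bit x t); rewrite /= ?subrr ?subr0.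
rewrite sumrB sumr_const card_ord.
by field; rewrite pnatr_eq0 -lt0n.
Qed.

Lemma ham_mx_mul_two_point (z w : 'I_k) a b (c : 'I_k) :
  (L *m two_point z w a b) c 0 = a * loss c z + b * loss c w.
Proof. by rewrite ham_mx_mulE sum_two_point. Qed.

Lemma calibration_ham_witness (eps : R) : (0 < T)%N -> 0 <= eps <= 1 ->
  exists f q, [/\ F f, simplex q, eps <= excess_task loss F f q &
    excess_surr Phi F f q = eps ^+ 2 / (8 * T%:R)].
Proof.
move=> T_gt0 /andP[eps_ge0 eps_le1].
have T_neq0 : T%:R != 0 :> R by rewrite pnatr_eq0 -lt0n.
have k_gt0 : (0 < k)%N by rewrite expn_gt0.
pose p := (1 + eps) / 2.
pose q := two_point zero_label ones_label (1 - p) p.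
pose theta := two_point zero_label ones_label (- 2^-1 : R) (- 2^-1).
have L_theta (c : 'I_k) : (L *m theta) c 0 = - 2^-1.
  by rewrite ham_mx_mul_two_point /= ham_loss_ones //; ring.
have L_q (c : 'I_k) : (L *m q) c 0 = p - eps * loss c 0.
  by rewrite ham_mx_mul_two_point /= ham_loss_ones // /p; field.
have q_simplex : simplex q.
  split=> [c|]; last by rewrite -(eq_bigr _ (fun c _ => mulr1 (q c 0))) sum_two_point /p; field.
  by rewrite mxE; apply: addr_ge0; apply: mulr_ge0; rewrite ?ler0n // /p; lra.
have loss_ones_zero : loss ones_label 0 = 1.
  by have := ham_loss_ones ones_label T_gt0; rewrite ham_loss_diag; lra.
exists (L *m theta), q; split => //; first by exists theta.
  have risk_theta : task_risk loss (L *m theta) q = p.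
    rewrite /task_risk (pred_idx_const k_gt0); last by move=> i j; rewrite !L_theta.
    by rewrite sum_two_point /= ham_loss_ones // ham_loss_diag; ring.
  have := inf_task_risk_ham_le ones_label q_simplex.1.
  by rewrite L_q loss_ones_zero /excess_task risk_theta /p; lra.
rewrite excess_surr_quad; last exact: q_simplex.2.
have affine (c : 'I_k) : (L *m theta) c 0 + (L *m q) c 0
    = eps / 2 + \sum_(t < T) (- eps / T%:R) * (label_bit c t)%:R.
  by rewrite L_theta L_q ham_loss_zero -mulr_sumr /p; field.
under eq_bigr do rewrite affine.
rewrite (sum_sqr_affine_bits _ _ (fun=> - eps / T%:R)) !sumr_const !card_ord.
rewrite -[(- eps / T%:R) *+ T]mulr_natl -[(- eps / T%:R) ^+ 2 *+ T]mulr_natl.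
by field; rewrite T_neq0 pnatr_eq0 -lt0n k_gt0.
Qed.
End Hamming.

Theorem proposition15 (R : realType) (T : nat) (eps : R) :
  (1 <= T)%N -> 0 <= eps <= 1 ->
  calibration (@quad_surr R T) (@ham_loss R T) (@ham_span R T) eps
  = (eps ^+ 2 / (8 * T%:R))%:E.
Proof.
move=> T_gt0 eps_01; have /andP[eps_ge0 _] := eps_01.
apply: calibration_eq; last exact: calibration_ham_witness.
by move=> f q; exact: calibration_ham_ge.
Qed.
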